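(* If $\Gamma_G$ is population monotonic, then $G$ has no induced subgraph isomorphic to the butterfly graph.
   Context: $G=(V,E;w)$ is a finite simple graph with edge weights $w:E\to\mathbb{R}$, $w_e>0$ for all $e\in E$. The matching game on $G$ is the cooperative game $\Gamma_G=(N,\gamma)$ with player set $N=V$ and, for $S\subseteq N$, $\gamma(S)$ equal to the maximum weight of a matching in the induced subgraph $G[S]$ (so $\gamma(\emptyset)=0$). A population monotonic allocation scheme (PMAS) is a family $(\boldsymbol{x}_S)_{\emptyset\neq S\subseteq N}$ with $\boldsymbol{x}_S=(x_{S,i})_{i\in S}\in\mathbb{R}^S$ such that (efficiency) $\sum_{i\in S}x_{S,i}=\gamma(S)$ for every nonempty $S\subseteq N$, and (monotonicity) $x_{S,i}\le x_{T,i}$ whenever $\emptyset\ne S\subseteq T\subseteq N$ and $i\in S$. $\Gamma_G$ is called population monotonic if it admits a PMAS. The butterfly graph is the graph on vertices $\{1,2,3,4,5\}$ with edge set exactly $\{12,13,23,34,35,45\}$ (two triangles sharing exactly the vertex $3$). *)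

From HB Require Import structures.
From mathcomp Require Import all_boot all_order all_algebra.
Set Implicit Arguments. Unset Strict Implicit. Unset Printing Implicit Defensive.
Import Order.TTheory GRing.Theory Num.Theory.
Local Open Scope ring_scope.

Definition simple_graph (T : finType) (e : rel T) : Prop :=
  (forall x y, e x y = e y x) /\ (forall x, ~~ e x x).

(* A matching of the induced subgraph G[S], represented as a set of ordered
   pairs (x, y), each being an edge with both ends in S, such that distinct
   pairs have disjoint endpoint sets (in particular (x,y) and (y,x) are not
   both present). *)
Definition is_matching (T : finType) (e : rel T) (S : {set T})
    (M : {set T * T}) : bool :=
  [forall p in M, [&& e p.1 p.2, p.1 \in S & p.2 \in S]] &&
  [forall p in M, forall q in M, (p != q) ==>
     [&& p.1 != q.1, p.1 != q.2, p.2 != q.1 & p.2 != q.2]].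

Definition matching_weight (R : realFieldType) (T : finType)
    (w : T -> T -> R) (M : {set T * T}) : R :=
  \sum_(p in M) w p.1 p.2.

(* gamma(S): maximum weight of a matching in G[S] (the empty matching is
   always available, so this is the max over all matchings, >= 0). *)
Definition match_value (R : realFieldType) (T : finType) (e : rel T)
    (w : T -> T -> R) (S : {set T}) : R :=
  \big[Num.max/0]_(M : {set T * T} | is_matching e S M) matching_weight w M.

Definition is_PMAS (R : realFieldType) (T : finType) (e : rel T)
    (w : T -> T -> R) (x : {set T} -> T -> R) : Prop :=
  (forall S : {set T}, S != set0 -> \sum_(i in S) x S i = match_value e w S) /\
  (forall (S U : {set T}) (i : T), S != set0 -> S \subset U -> i \in S ->
     x S i <= x U i).

Definition population_monotonic (R : realFieldType) (T : finType) (e : rel T)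
    (w : T -> T -> R) : Prop :=
  exists x : {set T} -> T -> R, is_PMAS e w x.

(* Butterfly graph on {0,..,4} (paper's vertices 1..5 shifted by -1):
   edges 01, 02, 12, 23, 24, 34. *)
Definition butterfly_edge (a b : 'I_5) : bool :=
  let a := nat_of_ord a in let b := nat_of_ord b in
  [|| (a == 0%N) && (b == 1%N), (a == 1%N) && (b == 0%N),
      (a == 0%N) && (b == 2%N), (a == 2%N) && (b == 0%N),
      (a == 1%N) && (b == 2%N), (a == 2%N) && (b == 1%N),
      (a == 2%N) && (b == 3%N), (a == 3%N) && (b == 2%N),
      (a == 2%N) && (b == 4%N), (a == 4%N) && (b == 2%N),
      (a == 3%N) && (b == 4%N) | (a == 4%N) && (b == 3%N)].

Definition has_induced_butterfly (T : finType) (e : rel T) : Prop :=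
  exists f : 'I_5 -> T, injective f /\
    (forall a b : 'I_5, a != b -> e (f a) (f b) = butterfly_edge a b).

From HB Require Import structures.
From mathcomp Require Import all_boot all_order all_algebra.
From mathcomp Require Import lra.
Import Order.TTheory GRing.Theory Num.Theory.
Local Open Scope ring_scope.

(* Write gamma for match_value and x for a PMAS.  Two general facts about a
   PMAS drive the proof:
   - marginal bound: a player i joining a coalition P receives at most the
     marginal value gamma(P + i) - gamma(P) (efficiency of P + i together with
     monotonicity from P);
   - on a coalition with at most three players a matching has at most one
     edge, so gamma is the heaviest edge there.
   From these: if a - c - u is an induced path with w(c,u) <= w(c,a), then in
   the pair game {c, u} the centre c takes the whole weight w(c,u), because u
   contributes nothing marginal to {a, c}.  Now let c lie on a triangle c u v
   and have a further neighbour a adjacent to neither u nor v (a "paw").  If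
   w(c,a) dominated both w(c,u) and w(c,v), then c would receive at least
   max(w(c,u), w(c,v)) in {c, u, v} while u, v still receive w(u,v) together,
   exceeding gamma(c,u,v).  Hence the pendant edge of a paw is strictly
   lighter than one of the triangle edges at c.  In a butterfly with centre C,
   applying this to all four pendant choices gives
   max(w(C,A), w(C,B)) < max(w(C,D), w(C,E)) and the reverse inequality. *)

Lemma set2_neq0 {T : finType} (i j : T) : [set i; j] != set0.
Proof. by apply/set0Pn; exists i; rewrite !inE eqxx. Qed.

Section MatchingValue.
Variables (R : realFieldType) (T : finType) (e : rel T) (w : T -> T -> R).

Lemma match_value_ge_edge (S : {set T}) i j :
  i \in S -> j \in S -> e i j -> w i j <= match_value e w S.
Proof.
move=> iS jS eij.
have M_ij : is_matching e S [set (i, j)].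
  apply/andP; split; apply/forallP => p; apply/implyP; rewrite inE => /eqP -> /=.
    by rewrite eij iS jS.
  by apply/forallP => q; apply/implyP; rewrite inE => /eqP ->; rewrite eqxx.
have := le_bigmax_cond 0 (matching_weight w) M_ij.
by rewrite /matching_weight big_set1.
Qed.

Hypothesis e_irr : forall i, ~~ e i i.

(* The pairs of a matching have four distinct endpoints, so a matching inside
   at most three vertices consists of at most one pair. *)
Lemma matching_card_le1 (S : {set T}) (M : {set T * T}) :
  (#|S| <= 3)%N -> is_matching e S M -> (#|M| <= 1)%N.
Proof.
move=> cardS /andP[/forallP inS /forallP disj].
have endpoints p : p \in M -> [&& e p.1 p.2, p.1 \in S & p.2 \in S].
  by move=> pM; have := inS p; rewrite pM.
have loopless p : p \in M -> p.1 != p.2.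
  case/endpoints/and3P => ep _ _; apply/eqP => eq12.
  by move: ep; rewrite eq12 (negbTE (e_irr _)).
apply/card_le1_eqP => p q pM qM; apply/eqP/negPn/negP; rewrite eq_sym => npq.
have := disj p; rewrite pM /= => /forallP /(_ q); rewrite qM /= npq /=.
case/and4P => d11 d12 d21 d22.
have uniq4 : uniq [:: p.1; p.2; q.1; q.2].
  by rewrite /= !inE !negb_or d11 d12 d21 d22 (loopless p pM) (loopless q qM).
have sub4 : [:: p.1; p.2; q.1; q.2] \subset S.
  case/endpoints/and3P: pM => _ p1 p2; case/endpoints/and3P: qM => _ q1 q2.
  by apply/subsetP => y; rewrite !inE => /or4P[]/eqP->.
have := subset_leq_card sub4.
by rewrite (card_uniqP uniq4) /= => /leq_trans/(_ cardS).
Qed.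

Lemma match_value_small_le (S : {set T}) (B : R) :
  (#|S| <= 3)%N -> 0 <= B ->
  (forall i j, i \in S -> j \in S -> e i j -> w i j <= B) ->
  match_value e w S <= B.
Proof.
move=> cardS B_ge0 edge_le; apply: bigmax_le => // M matM.
have /card_le1_eqP M1 := matching_card_le1 _ _ cardS matM.
case: (set_0Vmem M) => [->|[p pM]]; first by rewrite /matching_weight big_set0.
have -> : M = [set p].
  by apply/setP => q; rewrite inE; apply/idP/eqP => [qM|->]; [apply: M1|].
case/andP: matM => /forallP/(_ p); rewrite pM /= => /and3P[ep p1 p2] _.
by rewrite /matching_weight big_set1; apply: edge_le.
Qed.

Hypotheses (e_sym : forall i j, e i j = e j i) (w_sym : forall i j, w i j = w j i).

Lemma match_value_triple_le (a b c : T) (B : R) : 0 <= B ->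
  (e a b -> w a b <= B) -> (e a c -> w a c <= B) -> (e b c -> w b c <= B) ->
  match_value e w [set a; b; c] <= B.
Proof.
move=> B_ge0 hab hac hbc; apply: match_value_small_le => //.
  have sub3 : [set a; b; c] \subset mem [:: a; b; c].
    by apply/subsetP => y; rewrite !inE -orbA.
  exact: leq_trans (subset_leq_card sub3) (card_size _).
(* Of the nine ordered pairs, loops are not edges and every other pair is one
   of the three edges, in one orientation or the other. *)
move=> i j; rewrite !inE -!orbA => /or3P[]/eqP-> /or3P[]/eqP-> eij;
  first [ by move: eij; rewrite (negbTE (e_irr _))
        | by [exact: hab eij | exact: hac eij | exact: hbc eij]
        | rewrite w_sym e_sym in eij *;
          by [exact: hab eij | exact: hac eij | exact: hbc eij] ].
Qed.

End MatchingValue.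

Section PMAS.
Variables (R : realFieldType) (T : finType) (e : rel T) (w : T -> T -> R).
Variable x : {set T} -> T -> R.
Hypothesis x_PMAS : is_PMAS e w x.

Local Notation gamma := (match_value e w).

Lemma pmas_marginal {P : {set T}} {i : T} : P != set0 -> i \notin P ->
  x (P :|: [set i]) i <= gamma (P :|: [set i]) - gamma P.
Proof.
case: x_PMAS => eff mono P0 iP.
have PiP0 : P :|: [set i] != set0 by apply/set0Pn; exists i; rewrite !inE eqxx orbT.
have sharesP : gamma P <= \sum_(k in P) x (P :|: [set i]) k.
  rewrite -eff //; apply: ler_sum => k kP; apply: mono => //.
  exact: subsetUl.
move: sharesP; rewrite -(eff _ PiP0) !(setUC P) big_setU1 //=; lra.
Qed.

Lemma pmas_pair {i j : T} : i != j ->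
  x [set i; j] i + x [set i; j] j = gamma [set i; j].
Proof.
move=> ij; case: x_PMAS => eff _.
rewrite -eff ?set2_neq0 //.
by rewrite big_setU1 ?inE //= big_set1.
Qed.

Lemma pmas_pair_mono (i j : T) (S : {set T}) : i \in S -> j \in S ->
  x [set i; j] i <= x S i.
Proof.
move=> iS jS; case: x_PMAS => _ mono; apply: mono.
- exact: set2_neq0.
- by apply/subsetP => y; rewrite !inE => /orP[]/eqP->.
- by rewrite !inE eqxx.
Qed.

Hypotheses (e_irr : forall i, ~~ e i i) (e_sym : forall i j, e i j = e j i)
  (w_sym : forall i j, w i j = w j i) (w_pos : forall i j, e i j -> 0 < w i j).

Lemma edge_neq {i j : T} : e i j -> i != j.
Proof. by apply: contraTneq => ->; apply: e_irr. Qed.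

Lemma centre_takes_light_edge (a c u : T) :
  e c a -> e c u -> ~~ e a u -> a != u -> w c u <= w c a ->
  w c u <= x [set c; u] c.
Proof.
move=> eca ecu nau au light.
have cu := edge_neq ecu.
have heavy : 0 <= w c a by exact/ltW/w_pos.
have u_notin : u \notin [set a; c] by rewrite !inE negb_or eq_sym au eq_sym.
have gamma_acu : gamma [set a; c; u] <= w c a.
  apply: match_value_triple_le => //; first by rewrite w_sym.
  by rewrite (negbTE nau).
have gamma_ac : w c a <= gamma [set a; c].
  by apply: match_value_ge_edge; rewrite // !inE eqxx ?orbT.
have u_share : x [set a; c; u] u <= gamma [set a; c; u] - gamma [set a; c].
  exact: pmas_marginal (set2_neq0 a c) u_notin.
have u_mono : x [set u; c] u <= x [set a; c; u] u.
  by apply: pmas_pair_mono; rewrite !inE eqxx ?orbT.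
have pair_cu := pmas_pair cu.
have gamma_cu : w c u <= gamma [set c; u].
  by apply: match_value_ge_edge; rewrite // !inE eqxx ?orbT.
have pair_comm : [set u; c] = [set c; u] by rewrite setUC.
rewrite pair_comm in u_mono; lra.
Qed.

Lemma paw_pendant_lighter (a c u v : T) :
  e c a -> e c u -> e c v -> e u v -> ~~ e a u -> ~~ e a v ->
  a != u -> a != v ->
  w c a < Num.max (w c u) (w c v).
Proof.
move=> eca ecu ecv euv nau nav au av.
rewrite ltNge ge_max; apply/negP => /andP[cu_light cv_light].
have c_u := centre_takes_light_edge a c u eca ecu nau au cu_light.
have c_v := centre_takes_light_edge a c v eca ecv nav av cv_light.
have cu := edge_neq ecu; have cv := edge_neq ecv.
have wcu := w_pos _ _ ecu; have wcv := w_pos _ _ ecv; have wuv := w_pos _ _ euv.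
have c_notin : c \notin [set u; v] by rewrite !inE negb_or cu cv.
have c_share : x [set u; v; c] c <= gamma [set u; v; c] - gamma [set u; v].
  exact: pmas_marginal (set2_neq0 u v) c_notin.
have gamma_uv : w u v <= gamma [set u; v].
  by apply: match_value_ge_edge; rewrite // !inE eqxx ?orbT.
have gamma_cuv : gamma [set u; v; c] <=
    Num.max (w u v) (Num.max (w c u) (w c v)).
  apply: match_value_triple_le => //.
  - by rewrite !le_max (ltW wuv).
  - by rewrite le_max lexx.
  - by move=> _; rewrite w_sym !le_max lexx !orbT.
  - by move=> _; rewrite w_sym !le_max lexx !orbT.
have mono_u : x [set c; u] c <= x [set u; v; c] c.
  by apply: pmas_pair_mono; rewrite !inE eqxx ?orbT.
have mono_v : x [set c; v] c <= x [set u; v; c] c.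
  by apply: pmas_pair_mono; rewrite !inE eqxx ?orbT.
move: gamma_cuv; rewrite !le_max => /orP[|/orP[]] gamma_le; lra.
Qed.

End PMAS.

Theorem mainTheorem12 (R : realFieldType) (T : finType) (e : rel T)
    (w : T -> T -> R) :
  simple_graph e ->
  (forall x y, w x y = w y x) ->
  (forall x y, e x y -> 0 < w x y) ->
  population_monotonic e w ->
  ~ has_induced_butterfly e.
Proof.
move=> [e_sym e_irr] w_sym w_pos [x x_PMAS] [f [f_inj f_edge]].
pose A := f (@Ordinal 5 0 isT); pose B := f (@Ordinal 5 1 isT);
pose C := f (@Ordinal 5 2 isT); pose D := f (@Ordinal 5 3 isT);
pose E := f (@Ordinal 5 4 isT).
have paw := @paw_pendant_lighter _ _ _ _ _ x_PMAS e_irr e_sym w_sym w_pos.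
(* The four paws of the butterfly: pendant A or B on triangle C D E, and
   pendant D or E on triangle C A B. *)
have ltA : w C A < Num.max (w C D) (w C E).
  by apply: paw; rewrite ?f_edge ?(inj_eq f_inj).
have ltB : w C B < Num.max (w C D) (w C E).
  by apply: paw; rewrite ?f_edge ?(inj_eq f_inj).
have ltD : w C D < Num.max (w C A) (w C B).
  by apply: paw; rewrite ?f_edge ?(inj_eq f_inj).
have ltE : w C E < Num.max (w C A) (w C B).
  by apply: paw; rewrite ?f_edge ?(inj_eq f_inj).
by move: ltA ltB ltD ltE; rewrite !lt_max => /orP[]? /orP[]? /orP[]? /orP[]?; lra.
Qed.
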